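(* The function $F(x)=\beta_{i_1(x),1}+\sum_{k=2}^{\infty}\Big[\tilde\beta_{i_k(x),k}\prod_{j=1}^{k-1}\tilde p_{i_j(x),j}\Big]$, $x=\Delta^{-\tilde Q}_{i_1(x)i_2(x)\dots}$, is continuous at every point of $[0,1]$.
   Context: Let $(m_n)_{n\ge1}$ be finite nonnegative integers and $\tilde Q=\|q_{i,n}\|$ ($i\in\{0,\dots,m_n\}$) with $q_{i,n}>0$, $\sum_{i}q_{i,n}=1$ for all $n$, and $\prod_n q_{i_n,n}=0$ for every digit sequence $(i_n)$. Put $a_{0,n}=0$, $a_{i,n}=\sum_{l<i}q_{l,n}$; $\Delta^{\tilde Q}_{j_1j_2\dots}=a_{j_1,1}+\sum_{n\ge2}a_{j_n,n}\prod_{l<n}q_{j_l,l}$. For odd $n$: $\tilde q_{i,n}=q_{i,n}$, $\tilde a_{i,n}=a_{i,n}$; for even $n$: $\tilde q_{i,n}=q_{m_n-i,n}$, $\tilde a_{i,n}=a_{m_n-i,n}$. The nega-$\tilde Q$-representation $x=\Delta^{-\tilde Q}_{i_1i_2\dots}$ means $x=\Delta^{\tilde Q}_{i_1[m_2-i_2]i_3[m_4-i_4]\dots}$; every $x\in[0,1]$ has one, and numbers $\Delta^{-\tilde Q}_{i_1\dots i_nm_{n+1}0m_{n+3}0\dots}=\Delta^{-\tilde Q}_{i_1\dots[i_n-1]0m_{n+2}0m_{n+4}\dots}$ ($i_n\ne0$) have two (the value of $F$ is the same for both). Let $P=\|p_{i,n}\|$ have the same shape with $p_{i,n}\in(-1,1)$,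 $\sum_ip_{i,n}=1$, $\prod_n|p_{i_n,n}|=0$ for every digit sequence, $0<\sum_{i<c}p_{i,n}<1$ for $c\in\{1,\dots,m_n\}$. Put $\beta_{0,n}=0$, $\beta_{c,n}=\sum_{i<c}p_{i,n}$; for odd $n$: $\tilde p_{i,n}=p_{i,n}$, $\tilde\beta_{i,n}=\beta_{i,n}$; for even $n$: $\tilde p_{i,n}=p_{m_n-i,n}$, $\tilde\beta_{i,n}=\beta_{m_n-i,n}$. *)

From Stdlib Require Import Reals Lra ClassicalEpsilon.
From Coquelicot Require Import Coquelicot.
Open Scope R_scope.

(* Indexing convention: the paper's index n >= 1 corresponds to k = n - 1 >= 0.
   So the paper's odd n are the even k, the paper's even n are the odd k.
   m k : nat is m_{k+1};  q k i is q_{i,k+1};  p k i is p_{i,k+1}. *)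

Fixpoint sumR (f : nat -> R) (n : nat) : R :=
  match n with O => 0 | S n' => sumR f n' + f n' end.
Fixpoint prodR (f : nat -> R) (n : nat) : R :=
  match n with O => 1 | S n' => prodR f n' * f n' end.

(* a_{i,n} = sum_{l<i} q_{l,n}  (also used for beta with p) *)
Definition acc (q : nat -> nat -> R) (k i : nat) : R := sumR (q k) i.

Definition tld (m : nat -> nat) (f : nat -> nat -> R) (k i : nat) : R :=
  if Nat.odd k then f k (m k - i)%nat else f k i.

Definition digits_ok (m : nat -> nat) (d : nat -> nat) : Prop :=
  forall k, (d k <= m k)%nat.

Definition Q_ok (m : nat -> nat) (q : nat -> nat -> R) : Prop :=
  (forall k i, (i <= m k)%nat -> 0 < q k i) /\
  (forall k, sumR (q k) (S (m k)) = 1) /\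
  (forall d, digits_ok m d ->
     is_lim_seq (fun n => prodR (fun l => q l (d l)) n) 0).

Definition P_ok (m : nat -> nat) (p : nat -> nat -> R) : Prop :=
  (forall k i, (i <= m k)%nat -> -1 < p k i < 1) /\
  (forall k, sumR (p k) (S (m k)) = 1) /\
  (forall d, digits_ok m d ->
     is_lim_seq (fun n => prodR (fun l => Rabs (p l (d l))) n) 0) /\
  (forall k c, (1 <= c <= m k)%nat -> 0 < sumR (p k) c < 1).

Definition nega_term (m : nat -> nat) (q : nat -> nat -> R) (d : nat -> nat)
  (k : nat) : R :=
  tld m (acc q) k (d k) * prodR (fun l => tld m q l (d l)) k.

Definition nega_rep (m : nat -> nat) (q : nat -> nat -> R) (x : R)
  (d : nat -> nat) : Prop :=
  digits_ok m d /\ is_series (nega_term m q d) x.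

(* the chosen nega-Q~ digits of x (any representation; for x in [0,1]
   one exists) *)
Definition nega_digits (m : nat -> nat) (q : nat -> nat -> R) (x : R)
  : nat -> nat :=
  epsilon (inhabits (fun _ : nat => 0%nat)) (nega_rep m q x).

Definition F (m : nat -> nat) (q p : nat -> nat -> R) (x : R) : R :=
  Series (nega_term m p (nega_digits m q x)).

From Stdlib Require Import Reals Lra Lia ClassicalEpsilon Classical FunctionalExtensionality.
From Coquelicot Require Import Coquelicot.
Open Scope R_scope.

(* Reflecting the digits at the paper's even positions turns the nega-Q~
   representation into an ordinary one, so F maps the q-expansion of a digit
   sequence to its p-expansion.  The n-th partial sum and the product of the
   first n weights describe a cylinder segment containing the value, and these
   segments are nested.  By Koenig's lemma the p-cylinders of some fixed rank N
   are uniformly short, while positivity of q makes the q-cylinders of rank N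
   uniformly long.  Two points closer than the shortest q-cylinder therefore lie
   in the same or in adjacent rank-N cylinders, and adjacent cylinders meet at a
   point with the two representations "c m m m ..." and "(c+1) 0 0 0 ...", whose
   p-expansions agree; so the p-values differ by at most two p-cylinder lengths. *)

Definition in_segment (a l x : R) : Prop := exists t, 0 <= t <= 1 /\ x = a + t * l.

Lemma in_segment_iff a l x :
  in_segment a l x <-> Rmin a (a + l) <= x <= Rmax a (a + l).
Proof.
  unfold in_segment, Rmin, Rmax.
  destruct (Rle_dec a (a + l)); split.
  - intros [t [ht ->]]. nra.
  - intros hx. destruct (Req_dec l 0) as [-> | hl].
    + exists 0. split; lra.
    + assert (0 < l) by (destruct (Rtotal_order l 0) as [|[|]]; lra).
      exists ((x - a) / l). split; [|field; intro; lra].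
      split; [apply Rdiv_le_0_compat | apply (Rdiv_le_1 (x - a) l)]; lra.
  - intros [t [ht ->]]. nra.
  - intros hx. exists ((a - x) / - l). split; [|field; intro; lra].
    split; [apply Rdiv_le_0_compat | apply (Rdiv_le_1 (a - x) (- l))]; lra.
Qed.

Lemma in_segment_start a l : in_segment a l a.
Proof. exists 0. split; lra. Qed.

Lemma in_segment_end a l : in_segment a l (a + l).
Proof. exists 1. split; lra. Qed.

Lemma in_segment_convex a l x L s : in_segment a l x -> in_segment a l (x + L) ->
  0 <= s <= 1 -> in_segment a l (x + s * L).
Proof.
  intros [t [ht hx]] [t' [ht' hxL]] hs.
  exists (t + s * (t' - t)). split; nra.
Qed.

Lemma in_segment_dist a l x y : in_segment a l x -> in_segment a l y ->
  Rabs (x - y) <= Rabs l.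
Proof.
  intros [t [ht ->]] [t' [ht' ->]].
  replace (a + t * l - (a + t' * l)) with ((t - t') * l) by ring.
  rewrite Rabs_mult. pose proof (Rabs_pos l).
  assert (Rabs (t - t') <= 1) by (apply Rabs_le; lra). nra.
Qed.

Lemma in_segment_lim (a l x : R) (u : nat -> R) (n : nat) : is_lim_seq u x ->
  (forall N, (n <= N)%nat -> in_segment a l (u N)) -> in_segment a l x.
Proof.
  intros hu hseg. apply in_segment_iff.
  assert (hev : eventually (fun N => Rmin a (a + l) <= u N <= Rmax a (a + l))).
  { exists n. intros N hN. apply in_segment_iff, hseg, hN. }
  split.
  - apply (is_lim_seq_le_loc (fun _ => Rmin a (a + l)) u (Rmin a (a + l)) x);
      [| apply is_lim_seq_const | exact hu].
    destruct hev as [N0 hN0]. exists N0. intros N hN. apply hN0, hN.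
  - apply (is_lim_seq_le_loc u (fun _ => Rmax a (a + l)) x (Rmax a (a + l)));
      [| exact hu | apply is_lim_seq_const].
    destruct hev as [N0 hN0]. exists N0. intros N hN. apply hN0, hN.
Qed.

Lemma is_lim_seq_0_small (u : nat -> R) eps : is_lim_seq u 0 -> 0 < eps ->
  exists N, forall n, (N <= n)%nat -> Rabs (u n) < eps.
Proof.
  intros hu heps. apply is_lim_seq_spec in hu. destruct (hu (mkposreal eps heps)) as [N hN].
  exists N. intros n hn. rewrite <- (Rminus_0_r (u n)). apply hN, hn.
Qed.

Lemma le_0_of_lim_0 (c : R) (u : nat -> R) n : is_lim_seq u 0 ->
  (forall N, (n <= N)%nat -> c <= Rabs (u N)) -> c <= 0.
Proof.
  intros hu hc.
  apply is_lim_seq_abs_0 in hu.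
  apply (is_lim_seq_le_loc (fun _ => c) (fun N => Rabs (u N)) c 0);
    [| apply is_lim_seq_const | exact hu].
  exists n. exact hc.
Qed.

Lemma sum_n_sumR (a : nat -> R) n : sum_n a n = sumR a (S n).
Proof.
  induction n as [|n IH].
  - rewrite sum_O. simpl. ring.
  - rewrite sum_Sn, IH. reflexivity.
Qed.

Definition cyl_len (w : nat -> nat -> R) (e : nat -> nat) (n : nat) : R :=
  prodR (fun l => w l (e l)) n.

Definition digit_term (w : nat -> nat -> R) (e : nat -> nat) (k : nat) : R :=
  acc w k (e k) * cyl_len w e k.

Definition cyl_start (w : nat -> nat -> R) (e : nat -> nat) (n : nat) : R :=
  sumR (digit_term w e) n.

Definition expansion (w : nat -> nat -> R) (e : nat -> nat) : R :=
  Series (digit_term w e).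

Definition agree (a b : nat -> nat) (n : nat) : Prop :=
  forall k, (k < n)%nat -> a k = b k.

Definition upd (d : nat -> nat) (n c : nat) : nat -> nat :=
  fun k => if Nat.eqb k n then c else d k.

Record weights (m : nat -> nat) (w : nat -> nat -> R) : Prop := {
  weights_sum : forall k, acc w k (S (m k)) = 1;
  weights_acc : forall k c, (c <= S (m k))%nat -> 0 <= acc w k c <= 1;
  weights_cyl_len : forall e, digits_ok m e -> is_lim_seq (cyl_len w e) 0 }.

Lemma acc_S w k c : acc w k (S c) = acc w k c + w k c.
Proof. reflexivity. Qed.

Lemma cyl_len_S w e n : cyl_len w e (S n) = cyl_len w e n * w n (e n).
Proof. reflexivity. Qed.

Lemma cyl_start_S w e n :
  cyl_start w e (S n) = cyl_start w e n + acc w n (e n) * cyl_len w e n.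
Proof. reflexivity. Qed.

Lemma cyl_end_digit_S r d j :
  cyl_start r d (S j) + cyl_len r d (S j) =
  cyl_start r d j + acc r j (S (d j)) * cyl_len r d j.
Proof. rewrite cyl_start_S, cyl_len_S, acc_S. ring. Qed.

Lemma cyl_len_agree w a b n : agree a b n -> cyl_len w a n = cyl_len w b n.
Proof.
  induction n as [|n IH]; intros hab; [reflexivity|].
  rewrite !cyl_len_S, IH, (hab n) by (auto; intros k hk; apply hab; lia).
  reflexivity.
Qed.

Lemma cyl_start_agree w a b n : agree a b n -> cyl_start w a n = cyl_start w b n.
Proof.
  induction n as [|n IH]; intros hab; [reflexivity|].
  assert (hab' : agree a b n) by (intros k hk; apply hab; lia).
  rewrite !cyl_start_S, IH, (cyl_len_agree w a b n), (hab n); auto.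
Qed.

Lemma agree_sym a b n : agree a b n -> agree b a n.
Proof. intros hab k hk. symmetry. apply hab, hk. Qed.

Lemma agree_or_first_diff (a b : nat -> nat) N :
  agree a b N \/ exists j, (j < N)%nat /\ agree a b j /\ a j <> b j.
Proof.
  induction N as [|N [hag | [j [hj [hag hne]]]]].
  - left. intros k hk. lia.
  - destruct (Nat.eq_dec (a N) (b N)) as [heq | hne].
    + left. intros k hk. destruct (Nat.eq_dec k N) as [-> | ]; auto. apply hag. lia.
    + right. exists N. auto.
  - right. exists j. split; [lia | auto].
Qed.

Lemma ex_common_bound (M : nat) (P : nat -> nat -> Prop) :
  (forall c N N', P c N -> (N <= N')%nat -> P c N') ->
  (forall c, (c <= M)%nat -> exists N, P c N) ->
  exists N, forall c, (c <= M)%nat -> P c N.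
Proof.
  intros hmono hex. induction M as [|M IH].
  - destruct (hex 0%nat (le_n 0)) as [N hN].
    exists N. intros c hc. replace c with 0%nat by lia. exact hN.
  - destruct IH as [N1 hN1]; [intros c hc; apply hex; lia|].
    destruct (hex (S M) (le_n _)) as [N2 hN2].
    exists (max N1 N2). intros c hc.
    destruct (Nat.eq_dec c (S M)) as [-> | hne].
    + apply (hmono _ N2); [exact hN2 | lia].
    + apply (hmono _ N1); [apply hN1; lia | lia].
Qed.

Lemma fin_pos_lower_bound (M : nat) (f : nat -> R) :
  (forall i, (i <= M)%nat -> 0 < f i) ->
  exists c, 0 < c /\ forall i, (i <= M)%nat -> c <= f i.
Proof.
  intros hf. induction M as [|M IH].
  - exists (f 0%nat). split; [apply hf; lia|]. intros i hi. replace i with 0%nat by lia. lra.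
  - destruct IH as [c [hc hci]]; [intros i hi; apply hf; lia|].
    exists (Rmin c (f (S M))). split; [apply Rmin_pos; [exact hc | apply hf; lia]|].
    intros i hi. destruct (Nat.eq_dec i (S M)) as [-> | hne]; [apply Rmin_r|].
    eapply Rle_trans; [apply Rmin_l | apply hci; lia].
Qed.

Lemma ex_bracket (f : nat -> R) (r : R) M : f 0%nat <= r <= f (S M) ->
  exists c, (c <= M)%nat /\ f c <= r <= f (S c).
Proof.
  induction M as [|M IH]; intros hr.
  - exists 0%nat. split; [lia | exact hr].
  - destruct (Rle_lt_dec (f (S M)) r) as [hle | hlt].
    + exists (S M). split; [lia | lra].
    + destruct IH as [c [hc hcr]]; [lra|]. exists c. split; [lia | exact hcr].
Qed.

Section Expansion.

Variables (m : nat -> nat) (w : nat -> nat -> R).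
Hypothesis hw : weights m w.

Lemma weight_abs_le1 k i : (i <= m k)%nat -> Rabs (w k i) <= 1.
Proof.
  intros hi.
  pose proof (weights_acc _ _ hw k i ltac:(lia)).
  pose proof (weights_acc _ _ hw k (S i) ltac:(lia)) as h. rewrite acc_S in h.
  apply Rabs_le. lra.
Qed.

Lemma cyl_len_abs_nonincr e n N : digits_ok m e -> (n <= N)%nat ->
  Rabs (cyl_len w e N) <= Rabs (cyl_len w e n).
Proof.
  intros he hnN. induction hnN as [|N hnN IH]; [lra|].
  rewrite cyl_len_S, Rabs_mult.
  pose proof (weight_abs_le1 N (e N) (he N)).
  pose proof (Rabs_pos (cyl_len w e N)). pose proof (Rabs_pos (w N (e N))). nra.
Qed.

Lemma cyl_nested e n N : digits_ok m e -> (n <= N)%nat ->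
  in_segment (cyl_start w e n) (cyl_len w e n) (cyl_start w e N) /\
  in_segment (cyl_start w e n) (cyl_len w e n) (cyl_start w e N + cyl_len w e N).
Proof.
  intros he hnN. induction hnN as [|N hnN [hs hend]].
  - split; [apply in_segment_start | apply in_segment_end].
  - pose proof (weights_acc _ _ hw N (e N) ltac:(specialize (he N); lia)) as hacc.
    pose proof (weights_acc _ _ hw N (S (e N)) ltac:(specialize (he N); lia)) as hacc'.
    rewrite cyl_start_S, cyl_len_S.
    split.
    + apply in_segment_convex; auto.
    + replace (cyl_start w e N + acc w N (e N) * cyl_len w e N + cyl_len w e N * w N (e N))
        with (cyl_start w e N + acc w N (S (e N)) * cyl_len w e N)
        by (rewrite acc_S; ring).
      apply in_segment_convex; auto.
Qed.

Lemma expansion_in_cyl e : digits_ok m e ->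
  is_series (digit_term w e) (expansion w e) /\
  forall n, in_segment (cyl_start w e n) (cyl_len w e n) (expansion w e).
Proof.
  intros he.
  assert (hcauchy : ex_lim_seq_cauchy (cyl_start w e)).
  { intros eps.
    destruct (is_lim_seq_0_small _ eps (weights_cyl_len _ _ hw e he) (cond_pos eps))
      as [N hN].
    exists N. intros n n' hn hn'.
    eapply Rle_lt_trans; [| apply (hN N (le_n N))].
    apply (in_segment_dist (cyl_start w e N) (cyl_len w e N));
      [apply (cyl_nested e N n he hn) | apply (cyl_nested e N n' he hn')]. }
  apply ex_lim_seq_cauchy_corr in hcauchy. destruct hcauchy as [V hV].
  assert (hser : is_series (digit_term w e) V).
  { apply is_lim_seq_incr_1 in hV.
    eapply is_lim_seq_ext in hV; [exact hV|].
    intros n. simpl. rewrite sum_n_sumR. reflexivity. }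
  unfold expansion. rewrite (is_series_unique _ _ hser). split; [exact hser|].
  intros n. apply (in_segment_lim _ _ _ _ n hV).
  intros N hN. apply (cyl_nested e n N he hN).
Qed.

Lemma expansion_eq_of_in_cyl e x : digits_ok m e ->
  (forall n, in_segment (cyl_start w e n) (cyl_len w e n) x) -> expansion w e = x.
Proof.
  intros he hx.
  assert (hle : Rabs (expansion w e - x) <= 0).
  { apply (le_0_of_lim_0 _ _ 0 (weights_cyl_len _ _ hw e he)).
    intros N _. apply (in_segment_dist (cyl_start w e N) (cyl_len w e N));
      [apply (expansion_in_cyl e he) | apply hx]. }
  pose proof (Rabs_pos (expansion w e - x)).
  assert (Rabs (expansion w e - x) = 0) as h0 by lra.
  apply Rabs_eq_0 in h0. lra.
Qed.

Lemma expansion_agree_close a b N : digits_ok m a -> digits_ok m b -> agree a b N ->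
  Rabs (expansion w a - expansion w b) <= Rabs (cyl_len w a N).
Proof.
  intros ha hb hab.
  apply (in_segment_dist (cyl_start w a N) (cyl_len w a N)).
  - apply (expansion_in_cyl a ha).
  - rewrite (cyl_start_agree w a b N hab), (cyl_len_agree w a b N hab).
    apply (expansion_in_cyl b hb).
Qed.

Lemma cyl_end_max_tail e s N : (s <= N)%nat ->
  (forall k, (s <= k < N)%nat -> e k = m k) ->
  cyl_start w e N + cyl_len w e N = cyl_start w e s + cyl_len w e s.
Proof.
  intros hsN htop. induction hsN as [|N hsN IH]; [reflexivity|].
  rewrite cyl_start_S, cyl_len_S, htop by lia.
  pose proof (weights_sum _ _ hw N) as hsum. rewrite acc_S in hsum.
  rewrite <- IH by (intros k hk; apply htop; lia).
  replace (acc w N (m N)) with (1 - w N (m N)) by lra. ring.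
Qed.

Lemma cyl_start_zero_tail e s N : (s <= N)%nat ->
  (forall k, (s <= k < N)%nat -> e k = 0%nat) ->
  cyl_start w e N = cyl_start w e s.
Proof.
  intros hsN hbot. induction hsN as [|N hsN IH]; [reflexivity|].
  rewrite cyl_start_S, hbot, IH by (try intros k hk; try apply hbot; lia).
  unfold acc. simpl. ring.
Qed.

Definition cyl_wide (eps : R) (n : nat) (d : nat -> nat) : Prop :=
  forall N, exists e, digits_ok m e /\ agree e d n /\ eps <= Rabs (cyl_len w e N).



Lemma cyl_wide_child eps n d : cyl_wide eps n d ->
  exists c, (c <= m n)%nat /\ cyl_wide eps (S n) (upd d n c).
Proof.
  intros hwide. apply NNPP. intros hnone.
  assert (hsmall : forall c, (c <= m n)%nat -> exists N, forall e, digits_ok m e ->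
            agree e (upd d n c) (S n) -> Rabs (cyl_len w e N) < eps).
  { intros c hc. apply NNPP. intros hbig. apply hnone. exists c. split; [exact hc|].
    intros N. apply NNPP. intros hN. apply hbig. exists N. intros e he hag.
    apply Rnot_le_lt. intros hle. apply hN. exists e. auto. }
  destruct (ex_common_bound (m n) _ (fun c N N' hc hNN' e he hag =>
      Rle_lt_trans _ _ _ (cyl_len_abs_nonincr e N N' he hNN') (hc e he hag)) hsmall)
    as [N hN].
  destruct (hwide N) as [e [he [hag hle]]].
  assert (hag' : agree e (upd d n (e n)) (S n)).
  { intros k hk. unfold upd. destruct (Nat.eqb_spec k n) as [-> | hkn]; [reflexivity|].
    apply hag. lia. }
  specialize (hN (e n) (he n) e he hag'). lra.
Qed.

Lemma cyl_wide_branch eps d0 : cyl_wide eps 0 d0 ->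
  exists L, digits_ok m L /\ forall n, eps <= Rabs (cyl_len w L n).
Proof.
  intros h0.
  pose (child n d := epsilon (inhabits 0%nat)
    (fun c => (c <= m n)%nat /\ cyl_wide eps (S n) (upd d n c))).
  assert (hchild : forall n d, cyl_wide eps n d ->
    (child n d <= m n)%nat /\ cyl_wide eps (S n) (upd d n (child n d))).
  { intros n d hd. apply epsilon_spec, cyl_wide_child, hd. }
  pose (D := fix D n := match n with O => d0 | S n => upd (D n) n (child n (D n)) end).
  assert (hD : forall n, cyl_wide eps n (D n)).
  { induction n as [|n IH]; [exact h0 | apply (hchild n (D n) IH)]. }
  pose (L k := child k (D k)).
  assert (hDL : forall n, agree (D n) L n).
  { induction n as [|n IH]; intros k hk; [lia|].
    simpl. unfold upd. destruct (Nat.eqb_spec k n) as [-> | hkn]; [reflexivity|].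
    apply IH. lia. }
  exists L. split.
  - intros k. apply (hchild k (D k) (hD k)).
  - intros n. destruct (hD n n) as [e [he [hag hle]]].
    rewrite <- (cyl_len_agree w e L n); [exact hle|].
    intros k hk. rewrite hag by exact hk. apply hDL, hk.
Qed.

Lemma cyl_len_unif_small eps : 0 < eps ->
  exists N, forall e, digits_ok m e -> Rabs (cyl_len w e N) < eps.
Proof.
  intros heps. apply NNPP. intros hnone.
  assert (h0 : cyl_wide eps 0 (fun _ => 0%nat)).
  { intros N. apply NNPP. intros hN. apply hnone. exists N. intros e he.
    apply Rnot_le_lt. intros hle. apply hN. exists e.
    repeat split; [exact he | intros k hk; lia | exact hle]. }
  destruct (cyl_wide_branch eps _ h0) as [L [hL hwideL]].
  destruct (is_lim_seq_0_small _ eps (weights_cyl_len _ _ hw L hL) heps) as [N hN].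
  specialize (hN N (le_n N)). specialize (hwideL N). lra.
Qed.

End Expansion.

Section Positive.

Variables (m : nat -> nat) (q : nat -> nat -> R).
Hypothesis hq : weights m q.
Hypothesis hq_pos : forall k i, (i <= m k)%nat -> 0 < q k i.

Lemma cyl_len_pos e n : digits_ok m e -> 0 < cyl_len q e n.
Proof.
  intros he. induction n as [|n IH]; [unfold cyl_len; simpl; lra|].
  rewrite cyl_len_S. apply Rmult_lt_0_compat; [exact IH | apply hq_pos, he].
Qed.

Lemma acc_mono k c c' : (c <= c')%nat -> (c' <= S (m k))%nat -> acc q k c <= acc q k c'.
Proof.
  intros hcc' hc'. induction hcc' as [|c' hcc' IH]; [lra|].
  rewrite acc_S. pose proof (hq_pos k c' ltac:(lia)). specialize (IH ltac:(lia)). lra.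
Qed.

Lemma expansion_bounds e n : digits_ok m e ->
  cyl_start q e n <= expansion q e <= cyl_start q e n + cyl_len q e n.
Proof.
  intros he. destruct (proj2 (expansion_in_cyl m q hq e he) n) as [t [ht ->]].
  pose proof (cyl_len_pos e n he). nra.
Qed.

Lemma cyl_nested_bounds e s l : digits_ok m e -> (s <= l)%nat ->
  cyl_start q e s <= cyl_start q e l /\
  cyl_start q e l + cyl_len q e l <= cyl_start q e s + cyl_len q e s.
Proof.
  intros he hsl. pose proof (cyl_len_pos e s he).
  destruct (cyl_nested m q hq e s l he hsl) as [[t [ht ->]] [t' [ht' ->]]]. nra.
Qed.

Lemma cyl_len_lower N : exists delta, 0 < delta /\
  forall e, digits_ok m e -> delta <= cyl_len q e N.
Proof.
  induction N as [|N [delta [hdelta hle]]].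
  - exists 1. split; [lra|]. intros e _. unfold cyl_len. simpl. lra.
  - destruct (fin_pos_lower_bound (m N) (q N) (hq_pos N)) as [c [hc hci]].
    exists (delta * c). split; [apply Rmult_lt_0_compat; assumption|].
    intros e he. rewrite cyl_len_S.
    apply Rmult_le_compat; [lra | lra | apply hle, he | apply hci, he].
Qed.

Lemma cyl_len_step_lower N : exists delta, 0 < delta /\
  forall e l i, digits_ok m e -> (l < N)%nat -> (i <= m l)%nat ->
  delta <= cyl_len q e l * q l i.
Proof.
  destruct (cyl_len_lower N) as [delta [hdelta hle]].
  exists delta. split; [exact hdelta|]. intros e l i he hl hi.
  assert (hupd : digits_ok m (upd e l i)).
  { intros k. unfold upd. destruct (Nat.eqb_spec k l) as [-> | _]; auto. }
  replace (cyl_len q e l * q l i) with (cyl_len q (upd e l i) (S l)).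
  - eapply Rle_trans; [apply hle, hupd|].
    pose proof (cyl_len_abs_nonincr m q hq _ (S l) N hupd hl) as hmono.
    rewrite !Rabs_right in hmono by (apply Rle_ge, Rlt_le, cyl_len_pos, hupd).
    exact hmono.
  - rewrite cyl_len_S, (cyl_len_agree q _ e l).
    + unfold upd. rewrite Nat.eqb_refl. reflexivity.
    + intros k hk. unfold upd. destruct (Nat.eqb_spec k l); [lia | reflexivity].
Qed.

Section Gap.

Variables (N : nat) (delta : R).
Hypothesis hdelta : forall e l i, digits_ok m e -> (l < N)%nat -> (i <= m l)%nat ->
  delta <= cyl_len q e l * q l i.

Lemma expansion_gap_top e s l : digits_ok m e -> (s <= l < N)%nat -> (e l < m l)%nat ->
  expansion q e + delta <= cyl_start q e s + cyl_len q e s.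
Proof.
  intros he hl hel.
  pose proof (proj2 (expansion_bounds e (S l) he)) as hub.
  rewrite cyl_start_S, cyl_len_S in hub.
  pose proof (acc_mono l (S (e l)) (m l) hel ltac:(lia)) as hacc. rewrite acc_S in hacc.
  pose proof (weights_sum _ _ hq l) as hsum. rewrite acc_S in hsum.
  pose proof (hdelta e l (m l) he ltac:(lia) (le_n _)).
  pose proof (proj2 (cyl_nested_bounds e s l he ltac:(lia))).
  pose proof (cyl_len_pos e l he). nra.
Qed.

Lemma expansion_gap_bottom e s l : digits_ok m e -> (s <= l < N)%nat -> (0 < e l)%nat ->
  cyl_start q e s + delta <= expansion q e.
Proof.
  intros he hl hel.
  pose proof (proj1 (expansion_bounds e (S l) he)) as hlb. rewrite cyl_start_S in hlb.
  pose proof (acc_mono l 1 (e l) hel ltac:(specialize (he l); lia)) as hacc.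
  pose proof (hdelta e l 0 he ltac:(lia) ltac:(lia)).
  pose proof (proj1 (cyl_nested_bounds e s l he ltac:(lia))).
  pose proof (cyl_len_pos e l he). change (acc q l 1) with (0 + q l 0) in hacc. nra.
Qed.

End Gap.

Lemma expansion_surj x : 0 <= x <= 1 -> exists e, digits_ok m e /\ expansion q e = x.
Proof.
  intros hx.
  pose (Dig k r c := (c <= m k)%nat /\ acc q k c <= r <= acc q k (S c)).
  pose (dig k r := epsilon (inhabits 0%nat) (Dig k r)).
  assert (hdig : forall k r, 0 <= r <= 1 -> Dig k r (dig k r)).
  { intros k r hr. apply epsilon_spec, ex_bracket.
    change (acc q k 0) with 0. rewrite (weights_sum _ _ hq k). exact hr. }
  pose (rem := fix rem n := match n with
    | O => x
    | S n => (rem n - acc q n (dig n (rem n))) / q n (dig n (rem n)) end).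
  pose (e n := dig n (rem n)).
  assert (hrem : forall n, 0 <= rem n <= 1).
  { induction n as [|n IH]; [exact hx|].
    destruct (hdig n (rem n) IH) as [hc [hlo hhi]]. rewrite acc_S in hhi.
    pose proof (hq_pos n _ hc) as hpos.
    change (rem (S n)) with ((rem n - acc q n (dig n (rem n))) / q n (dig n (rem n))).
    split; [apply Rdiv_le_0_compat | apply (Rdiv_le_1 _ _ hpos)]; lra. }
  assert (he : digits_ok m e) by (intros k; apply (hdig k (rem k) (hrem k))).
  exists e. split; [exact he|].
  apply (expansion_eq_of_in_cyl m q hq e x he). intros n.
  exists (rem n). split; [apply hrem|].
  induction n as [|n IH]; [unfold cyl_start, cyl_len; simpl; ring|].
  rewrite cyl_start_S, cyl_len_S, IH.
  pose proof (hq_pos n (e n) (he n)).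
  change (rem (S n)) with ((rem n - acc q n (e n)) / q n (e n)). field. lra.
Qed.

End Positive.

Section Continuity.

Variables (m : nat -> nat) (q p : nat -> nat -> R).
Hypothesis hq : weights m q.
Hypothesis hq_pos : forall k i, (i <= m k)%nat -> 0 < q k i.
Hypothesis hp : weights m p.

Lemma expansion_close_across N delta d d' j :
  (forall e l i, digits_ok m e -> (l < N)%nat -> (i <= m l)%nat ->
     delta <= cyl_len q e l * q l i) ->
  digits_ok m d -> digits_ok m d' -> (j < N)%nat -> agree d d' j -> (d j < d' j)%nat ->
  expansion q d' - expansion q d < delta ->
  Rabs (expansion p d - expansion p d') <= Rabs (cyl_len p d N) + Rabs (cyl_len p d' N).
Proof.
  intros hdelta hd hd' hj hag hlt hclose.
  assert (hstart' : forall r, cyl_start r d' (S j) =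
                      cyl_start r d j + acc r j (d' j) * cyl_len r d j).
  { intros r. rewrite cyl_start_S, (cyl_start_agree r d' d j), (cyl_len_agree r d' d j);
      auto using agree_sym. }
  pose proof (cyl_len_pos m q hq_pos d j hd) as hlen.
  pose proof (proj2 (expansion_bounds m q hq hq_pos d (S j) hd)) as hqd_hi.
  pose proof (proj1 (expansion_bounds m q hq hq_pos d' (S j) hd')) as hqd'_lo.
  rewrite cyl_end_digit_S in hqd_hi. rewrite hstart' in hqd'_lo.
  (* Up to rank N, d' must read "(d j + 1) 0 0 ..." and d must read "d j m m ...":
     otherwise a whole q-cylinder of rank at most N separates their values. *)
  assert (hsucc : d' j = S (d j)).
  { destruct (Nat.eq_dec (d' j) (S (d j))) as [| hne]; [assumption|exfalso].
    pose proof (acc_mono m q hq_pos j (S (S (d j))) (d' j) ltac:(lia)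
                  ltac:(specialize (hd' j); lia)) as hacc.
    rewrite acc_S in hacc.
    pose proof (hdelta d j (S (d j)) hd hj ltac:(specialize (hd' j); lia)). nra. }
  rewrite hsucc in hqd'_lo, hstart'.
  assert (htop : forall l, (S j <= l < N)%nat -> d l = m l).
  { intros l hl. destruct (Nat.lt_ge_cases (d l) (m l)) as [hlt' | hge];
      [exfalso | specialize (hd l); lia].
    pose proof (expansion_gap_top m q hq hq_pos N delta hdelta d (S j) l hd hl hlt') as hgap.
    rewrite cyl_end_digit_S in hgap. lra. }
  assert (hbot : forall l, (S j <= l < N)%nat -> d' l = 0%nat).
  { intros l hl. destruct (Nat.eq_dec (d' l) 0) as [| hne]; [assumption | exfalso].
    pose proof (expansion_gap_bottom m q hq hq_pos N delta hdelta d' (S j) l hd' hl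
                  ltac:(lia)) as hgap.
    rewrite hstart' in hgap. lra. }
  set (Jp := cyl_start p d (S j) + cyl_len p d (S j)).
  assert (hJd : cyl_start p d N + cyl_len p d N = Jp)
    by (apply (cyl_end_max_tail m p hp); [lia | exact htop]).
  assert (hJd' : cyl_start p d' N = Jp).
  { unfold Jp. rewrite cyl_end_digit_S, <- hstart'.
    apply (cyl_start_zero_tail p); [lia | exact hbot]. }
  replace (expansion p d - expansion p d')
    with ((expansion p d - Jp) + (Jp - expansion p d')) by ring.
  eapply Rle_trans; [apply Rabs_triang | apply Rplus_le_compat].
  - apply (in_segment_dist (cyl_start p d N) (cyl_len p d N));
      [apply (expansion_in_cyl m p hp d hd) | rewrite <- hJd; apply in_segment_end].
  - rewrite Rabs_minus_sym.
    apply (in_segment_dist (cyl_start p d' N) (cyl_len p d' N));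
      [apply (expansion_in_cyl m p hp d' hd') | rewrite <- hJd'; apply in_segment_start].
Qed.

Lemma expansion_unif_cont eps : 0 < eps -> exists delta, 0 < delta /\
  forall d d', digits_ok m d -> digits_ok m d' ->
    Rabs (expansion q d - expansion q d') < delta ->
    Rabs (expansion p d - expansion p d') < eps.
Proof.
  intros heps.
  destruct (cyl_len_unif_small m p hp (eps / 2) ltac:(lra)) as [N hN].
  destruct (cyl_len_step_lower m q hq hq_pos N) as [delta [hdelta hlow]].
  exists delta. split; [exact hdelta|]. intros d d' hd hd' hclose.
  pose proof (hN d hd). pose proof (hN d' hd').
  destruct (agree_or_first_diff d d' N) as [hag | [j [hj [hag hne]]]].
  - pose proof (expansion_agree_close m p hp d d' N hd hd' hag). lra.
  - apply Rabs_lt_between in hclose.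
    destruct (Nat.lt_gt_cases (d j) (d' j)) as [[hlt | hgt] _]; [exact hne| |].
    + pose proof (expansion_close_across N delta d d' j hlow hd hd' hj hag hlt
                    ltac:(lra)). lra.
    + rewrite Rabs_minus_sym.
      pose proof (expansion_close_across N delta d' d j hlow hd' hd hj (agree_sym _ _ _ hag)
                    hgt ltac:(lra)). lra.
Qed.

End Continuity.

Definition tld_digits (m : nat -> nat) (d : nat -> nat) : nat -> nat :=
  fun k => if Nat.odd k then (m k - d k)%nat else d k.

Lemma tld_digits_ok m d : digits_ok m d -> digits_ok m (tld_digits m d).
Proof. intros hd k. specialize (hd k). unfold tld_digits. destruct (Nat.odd k); lia. Qed.

Lemma tld_digits_invol m d : digits_ok m d -> tld_digits m (tld_digits m d) = d.
Proof.
  intros hd. apply functional_extensionality. intros k. specialize (hd k).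
  unfold tld_digits. destruct (Nat.odd k); lia.
Qed.

Lemma prodR_ext (f g : nat -> R) n : (forall l, f l = g l) -> prodR f n = prodR g n.
Proof.
  intros hfg. induction n as [|n IH]; [reflexivity|]. simpl. rewrite IH, hfg. reflexivity.
Qed.

Lemma prodR_abs (f : nat -> R) n : Rabs (prodR f n) = prodR (fun l => Rabs (f l)) n.
Proof.
  induction n as [|n IH]; simpl; [apply Rabs_R1 | rewrite Rabs_mult, IH; reflexivity].
Qed.

Lemma tld_tld_digits m (f : nat -> nat -> R) d k : tld m f k (d k) = f k (tld_digits m d k).
Proof. unfold tld, tld_digits. destruct (Nat.odd k); reflexivity. Qed.

Lemma nega_term_eq m w d : nega_term m w d = digit_term w (tld_digits m d).
Proof.
  apply functional_extensionality. intros k.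
  unfold nega_term, digit_term, cyl_len. rewrite tld_tld_digits. f_equal.
  apply prodR_ext. intros l. apply tld_tld_digits.
Qed.

Lemma Q_ok_weights m q : Q_ok m q -> weights m q.
Proof.
  intros [hpos [hsum hlim]]. split; [exact hsum | | exact hlim].
  intros k c hc.
  pose proof (acc_mono m q hpos k 0 c (Nat.le_0_l _) hc).
  pose proof (acc_mono m q hpos k c (S (m k)) hc (le_n _)).
  specialize (hsum k). unfold acc in *. simpl in *. lra.
Qed.

Lemma P_ok_weights m p : P_ok m p -> weights m p.
Proof.
  intros [_ [hsum [hlim hpart]]]. split; [exact hsum | |].
  - intros k c hc. specialize (hsum k). unfold acc.
    destruct c as [|c]; [simpl; lra|].
    destruct (Nat.eq_dec c (m k)) as [-> | hne]; [lra|].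
    pose proof (hpart k (S c) ltac:(lia)). lra.
  - intros e he. apply is_lim_seq_abs_0.
    eapply is_lim_seq_ext; [|apply hlim, he]. intros n. symmetry. apply prodR_abs.
Qed.

Lemma F_expansion m q p x : Q_ok m q -> 0 <= x <= 1 ->
  exists e, digits_ok m e /\ expansion q e = x /\ F m q p x = expansion p e.
Proof.
  intros hQ hx. pose proof (Q_ok_weights m q hQ) as hq.
  assert (hrep : nega_rep m q x (nega_digits m q x)).
  { unfold nega_digits. apply epsilon_spec.
    destruct (expansion_surj m q hq (proj1 hQ) x hx) as [e [he hex]].
    exists (tld_digits m e). split; [apply tld_digits_ok, he|].
    rewrite nega_term_eq, tld_digits_invol, <- hex by exact he.
    apply (expansion_in_cyl m q hq e he). }
  destruct hrep as [hd hser]. rewrite nega_term_eq in hser.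
  exists (tld_digits m (nega_digits m q x)).
  split; [apply tld_digits_ok, hd|]. split.
  - apply is_series_unique, hser.
  - unfold F. rewrite nega_term_eq. reflexivity.
Qed.

Theorem mainTheorem3 (m : nat -> nat) (q p : nat -> nat -> R)
  (hQ : Q_ok m q) (hP : P_ok m p) :
  forall x, 0 <= x <= 1 ->
  forall eps, 0 < eps -> exists delta, 0 < delta /\
    forall y, 0 <= y <= 1 -> Rabs (y - x) < delta ->
      Rabs (F m q p y - F m q p x) < eps.
Proof.
  intros x hx eps heps.
  destruct (expansion_unif_cont m q p (Q_ok_weights m q hQ) (proj1 hQ)
              (P_ok_weights m p hP) eps heps) as [delta [hdelta hcont]].
  exists delta. split; [exact hdelta|]. intros y hy hyx.
  destruct (F_expansion m q p x hQ hx) as [ex [hex [hqx hFx]]].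
  destruct (F_expansion m q p y hQ hy) as [ey [hey [hqy hFy]]].
  rewrite hFx, hFy. apply hcont; [exact hey | exact hex | rewrite hqx, hqy; exact hyx].
Qed.
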